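(* Let $A$ be a ring with an action of $S_n$ by ring automorphisms, and let $a_1,\dots,a_{n-1}$ be elements of the center $Z(A)$ such that $w(a_i)=a_j$ for all $w\in S_n$ and $1\le i,j<n$ with $w\{i,i+1\}=\{j,j+1\}$ (equivalently: $s_j(a_i)=a_i$ for $j\ne i-1,i+1$, and $s_{i+1}(a_i)=s_i(a_{i+1})$ for $1\le i\le n-2$). Let $R$ be the ring generated by $A$ and elements $\tilde\tau_1,\dots,\tilde\tau_{n-1}$ with defining relations: $A\to R$ is a ring homomorphism; $\tilde\tau_i\,a=s_i(a)\,\tilde\tau_i$ for $a\in A$; $\tilde\tau_i\tilde\tau_j=\tilde\tau_j\tilde\tau_i$ for $|i-j|>1$ and $\tilde\tau_{i+1}\tilde\tau_i\tilde\tau_{i+1}=\tilde\tau_i\tilde\tau_{i+1}\tilde\tau_i$; $\tilde\tau_i^2=a_i$. For a reduced expression $w=s_{i_1}\cdots s_{i_\ell}$ of $w\in S_n$ put $\tilde\tau_w=\tilde\tau_{i_1}\cdots\tilde\tau_{i_\ell}$. Then $\tilde\tau_w$ is independent of the choice of reduced expression, and the map $A\otimes\mathbb{Z}[S_n]\to R$, $a\otimes w\mapsto a\tilde\tau_w$, is a linear isomorphism.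
   Context: $s_i$ denotes the transposition $(i,i+1)\in S_n$. *)

From HB Require Import structures.
From mathcomp Require Import all_boot all_order all_algebra all_fingroup.
Set Implicit Arguments. Unset Strict Implicit. Unset Printing Implicit Defensive.
Import GRing.Theory.
Local Open Scope ring_scope.

(* Indices of the generators s_1..s_{n-1} are 0-based: i : 'I_n.-1 stands
   for s_{i+1}, the transposition of the points i and i+1 of 'I_n. *)
Lemma sgen_lo_proof n (i : 'I_n.-1) : (i < n)%N.
Proof. by rewrite (leq_trans (ltn_ord i)) // leq_pred. Qed.

Lemma sgen_hi_proof n (i : 'I_n.-1) : (i.+1 < n)%N.
Proof. by case: n i => [|n] [m Hm] //=. Qed.

Definition sgen_lo n (i : 'I_n.-1) : 'I_n := Ordinal (sgen_lo_proof i).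
Definition sgen_hi n (i : 'I_n.-1) : 'I_n := Ordinal (sgen_hi_proof i).

Definition sgen n (i : 'I_n.-1) : 'S_n := tperm (sgen_lo i) (sgen_hi i).

(* The permutation s_{i1} o s_{i2} o ... o s_{il} (composition of functions;
   note MathComp's product (u * v) x = v (u x)). *)
Fixpoint wprod n (s : seq 'I_n.-1) : 'S_n :=
  if s is i :: t then (wprod t * sgen i)%g else 1%g.

Definition reduced_expr n (w : 'S_n) (s : seq 'I_n.-1) : Prop :=
  wprod s = w /\ forall t : seq 'I_n.-1, wprod t = w -> (size s <= size t)%N.

Definition is_ringhom (R S : pzRingType) (g : R -> S) : Prop :=
  (forall x y, g (x + y) = g x + g y) /\
  (forall x y, g (x * y) = g x * g y) /\ g 1 = 1.

(* act is a (left, w.r.t. composition of permutations) action of S_n on A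
   by ring automorphisms *)
Definition is_ring_action n (A : pzRingType) (act : 'S_n -> A -> A) : Prop :=
  (forall w, is_ringhom (act w)) /\
  (forall x, act 1%g x = x) /\
  (forall (u v : 'S_n) x, act (u * v)%g x = act v (act u x)).

Definition tau_relations n (A : pzRingType) (act : 'S_n -> A -> A)
  (a : 'I_n.-1 -> A) (S : pzRingType) (f : A -> S) (t : 'I_n.-1 -> S) : Prop :=
  [/\ is_ringhom f,
      (forall i x, t i * f x = f (act (sgen i) x) * t i),
      (forall i j : 'I_n.-1, (i.+1 < j)%N || (j.+1 < i)%N -> t i * t j = t j * t i),
      (forall i j : 'I_n.-1, nat_of_ord j = i.+1 ->
          t j * t i * t j = t i * t j * t i)
    & (forall i, t i * t i = f (a i))].

(* R (with iota : A -> R and tau_i) is the ring generated by A and the tau_i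
   subject to the defining relations, i.e. it is the universal such ring. *)
Definition is_presented_ring n (A : pzRingType) (act : 'S_n -> A -> A)
  (a : 'I_n.-1 -> A) (R : pzRingType) (iota : A -> R) (tau : 'I_n.-1 -> R) : Prop :=
  tau_relations act a iota tau /\
  forall (S : pzRingType) (f : A -> S) (t : 'I_n.-1 -> S),
    tau_relations act a f t ->
    exists g : R -> S,
      (is_ringhom g /\ (forall x, g (iota x) = f x) /\ (forall i, g (tau i) = t i)) /\
      (forall g' : R -> S,
         is_ringhom g' /\ (forall x, g' (iota x) = f x) /\ (forall i, g' (tau i) = t i) ->
         g' =1 g).

Definition tau_word n (R : pzRingType) (tau : 'I_n.-1 -> R) (s : seq 'I_n.-1) : R :=
  \prod_(i <- s) tau i.

(* The length of a permutation is an inversion count, and multiplying by s_i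
   changes it by one according to whether i is a descent; this yields reduced
   words.  Two reduced words of w starting with different letters i and j can
   both be linked, by induction on the length, to reduced words starting with
   the two sides of the braid relation between s_i and s_j, so tau_w is well
   defined using only the braid relations (Matsumoto).  Since tau_i tau_w is
   tau_(w s_i) or a_i tau_(w s_i), the sums \sum_w iota (c_w) tau_w form a
   subring containing the generators, hence everything, as R is presented.
   For injectivity the relations are realised by matrices over A indexed by S_n
   (left multiplication in the would-be basis), where the column of index 1 of
   the image of \sum_w iota (c_w) tau_w is (w^-1 (c_w))_w. *)

From HB Require Import structures.
From mathcomp Require Import all_boot all_order all_algebra all_fingroup.
From mathcomp Require Import zify.
From Stdlib Require Import ClassicalEpsilon.
Import GRing.Theory.
Set Implicit Arguments. Unset Strict Implicit. Unset Printing Implicit Defensive.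

Section SymmetricGroup.
Variable n : nat.
Local Notation I := 'I_n.-1.
Local Notation lo := (@sgen_lo n).
Local Notation hi := (@sgen_hi n).
Local Notation s := (@sgen n).

Definition far (i j : I) := (i.+1 < j) || (j.+1 < i).

Lemma far_sym (i j : I) : far i j = far j i.
Proof. by rewrite /far orbC. Qed.

Lemma sgen2 (i : I) : (s i * s i = 1)%g.
Proof. exact: tperm2. Qed.

Lemma sgenV (i : I) : ((s i)^-1 = s i)%g.
Proof. exact: tpermV. Qed.

Lemma mulg_sgenK (i : I) (w : 'S_n) : (w * s i * s i = w)%g.
Proof. by rewrite -mulgA sgen2 mulg1. Qed.

Lemma eq_mulg_sgen (i : I) (u v : 'S_n) : (u == v * s i)%g = (v == u * s i)%g.
Proof. by apply/eqP/eqP => ->; rewrite mulg_sgenK. Qed.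

Lemma eq_mulg_sgenr (i : I) (u v : 'S_n) : (u * s i == v)%g = (u == v * s i)%g.
Proof. by apply/eqP/eqP => [<-|->]; rewrite mulg_sgenK. Qed.

Lemma sgenL (i : I) : s i (lo i) = hi i.
Proof. exact: tpermL. Qed.

Lemma sgenR (i : I) : s i (hi i) = lo i.
Proof. exact: tpermR. Qed.

Lemma sgen_val (i : I) (x : 'I_n) :
  (x = i :> nat /\ s i x = i.+1 :> nat) \/ (x = i.+1 :> nat /\ s i x = i :> nat) \/
  (x <> i :> nat /\ x <> i.+1 :> nat /\ s i x = x :> nat).
Proof.
rewrite /sgen; case: tpermP => [->|->|ne_lo ne_hi]; [by left | by right; left |].
by right; right; split; [|split] => // e; [apply: ne_lo | apply: ne_hi]; apply: val_inj.
Qed.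

Lemma sgen_far_lo (i j : I) : far i j -> s j (lo i) = lo i.
Proof. by rewrite /far => ij; apply: val_inj; have := sgen_val j (lo i); rewrite /=; lia. Qed.

Lemma sgen_far_hi (i j : I) : far i j -> s j (hi i) = hi i.
Proof. by rewrite /far => ij; apply: val_inj; have := sgen_val j (hi i); rewrite /=; lia. Qed.

Lemma hi_lo_next (i j : I) : j = i.+1 :> nat -> hi i = lo j.
Proof. by move=> ij; apply: val_inj. Qed.

Lemma sgen_next_lo (i j : I) : j = i.+1 :> nat -> s j (lo i) = lo i.
Proof. by move=> ij; apply: val_inj; have := sgen_val j (lo i); rewrite /=; lia. Qed.

Lemma sgen_prev_hi (i j : I) : j = i.+1 :> nat -> s i (hi j) = hi j.
Proof. by move=> ij; apply: val_inj; have := sgen_val i (hi j); rewrite /=; lia. Qed.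

Lemma sgen_comm (i j : I) : far i j -> (s i * s j = s j * s i)%g.
Proof.
move=> ij; have fix_i : (s i ^ s j = s i)%g.
  by rewrite {1}/sgen tpermJ sgen_far_lo // sgen_far_hi.
by rewrite conjgC fix_i.
Qed.

Lemma sgen_braid (i j : I) : j = i.+1 :> nat -> (s j * s i * s j = s i * s j * s i)%g.
Proof.
move=> ij; have conj_ij : (s i ^ s j = s j ^ s i)%g.
  rewrite {1}/sgen tpermJ sgen_next_lo // (hi_lo_next ij) sgenL.
  by rewrite {1}/sgen tpermJ -(hi_lo_next ij) sgenR sgen_prev_hi.
by move: conj_ij; rewrite !conjgE !sgenV !mulgA.
Qed.

Definition inversions (p : 'S_n) : nat :=
  \sum_(xy : 'I_n * 'I_n) ((xy.1 < xy.2) && (p xy.2 < p xy.1)).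

(* [(w * s i) x = s i (w x)]: right multiplication by [s i] exchanges the values
   [i] and [i+1], which changes the inversion count of [w^-1] by one. *)
Definition perm_length (w : 'S_n) : nat := inversions (w^-1)%g.

Definition descent (w : 'S_n) (i : I) : bool := (w^-1)%g (hi i) < (w^-1)%g (lo i).

Lemma lo_hi_neq (i : I) : (lo i, hi i) != (hi i, lo i).
Proof. by rewrite xpair_eqE; apply/nandP; left; apply/eqP => /(congr1 val) /=; lia. Qed.

Lemma ltn_sgen (i : I) (x y : 'I_n) :
  (x, y) != (lo i, hi i) -> (x, y) != (hi i, lo i) -> (s i x < s i y) = (x < y).
Proof.
move=> /eqP ne_lohi /eqP ne_hilo.
have {}ne_lohi : ~ (x = i :> nat /\ y = i.+1 :> nat).
  by case=> ex ey; apply: ne_lohi; congr pair; apply: val_inj.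
have {}ne_hilo : ~ (x = i.+1 :> nat /\ y = i :> nat).
  by case=> ex ey; apply: ne_hilo; congr pair; apply: val_inj.
case: (sgen_val i x) => [[ex sx]|[[ex sx]|[ex1 [ex2 sx]]]];
case: (sgen_val i y) => [[ey sy]|[[ey sy]|[ey1 [ey2 sy]]]]; apply/idP/idP; lia.
Qed.

Lemma inversions_sgen (p : 'S_n) (i : I) :
  inversions (s i * p)%g + (p (hi i) < p (lo i)) = inversions p + (p (lo i) < p (hi i)).
Proof.
have split_pairs (F : 'I_n * 'I_n -> nat) : \sum_xy F xy =
    F (lo i, hi i) + F (hi i, lo i) +
    \sum_(xy | (xy != (lo i, hi i)) && (xy != (hi i, lo i))) F xy.
  by rewrite (bigD1 (lo i, hi i)) // (bigD1 (hi i, lo i)) 1?eq_sym ?lo_hi_neq //= addnA.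
rewrite /inversions (reindex_inj (h := fun xy => (s i xy.1, s i xy.2))) /=; last first.
  by move=> [x y] [x' y'] /= [/perm_inj -> /perm_inj ->].
rewrite !split_pairs /= !permM !tpermK sgenL sgenR /= ltnSn ltnNge leqnSn /=.
rewrite (eq_bigr (fun xy : 'I_n * 'I_n => ((xy.1 < xy.2) && (p xy.2 < p xy.1) : nat))).
  by rewrite add0n addn0 addnAC [RHS]addnAC; congr (_ + _); exact: addnC.
by move=> [x y] /andP [ne1 ne2] /=; rewrite !permM !tpermK ltn_sgen.
Qed.

Lemma perm_lo_hi_neq (p : 'S_n) (i : I) : p (lo i) <> p (hi i) :> nat.
Proof. by move/val_inj/perm_inj/(congr1 val) => /=; lia. Qed.

Lemma descent_mulg (w u : 'S_n) (i j : I) :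
  u (lo i) = lo j -> u (hi i) = hi j -> descent (w * u)%g j = descent w i.
Proof. by move=> ulo uhi; rewrite /descent invMg !permM -ulo -uhi !permK. Qed.

Lemma descent_sgen (w : 'S_n) (i : I) : descent (w * s i)%g i = ~~ descent w i.
Proof.
rewrite /descent invMg !permM sgenV sgenL sgenR.
by have := @perm_lo_hi_neq (w^-1)%g i; case: ltngtP.
Qed.

Lemma perm_length_sgen (w : 'S_n) (i : I) :
  perm_length (w * s i)%g + descent w i = perm_length w + ~~ descent w i.
Proof.
rewrite /perm_length invMg sgenV inversions_sgen; congr (_ + nat_of_bool _).
by rewrite /descent; have := @perm_lo_hi_neq (w^-1)%g i; case: ltngtP.
Qed.

Lemma perm_length1 : perm_length 1 = 0.
Proof.
by rewrite /perm_length invg1 /inversions big1 // => -[x y] _; rewrite !perm1 /=; case: ltngtP.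
Qed.

Lemma perm_length_wprod (t : seq I) : perm_length (wprod t) <= size t.
Proof.
elim: t => [|i t IH] /=; first by rewrite perm_length1.
by have := perm_length_sgen (wprod t) i; lia.
Qed.

Lemma no_descent_eq1 (w : 'S_n) : (forall i, ~~ descent w i) -> w = 1%g.
Proof.
move=> asc; set p := (w^-1)%g.
have incr (i : I) : p (lo i) < p (hi i).
  by have := asc i; have := @perm_lo_hi_neq (w^-1)%g i; rewrite /descent -/p; lia.
have ge_id m (x : 'I_n) : x = m :> nat -> m <= p x.
  elim: m x => [//|m IH] x ex.
  have m_lt : m < n.-1 by have := ltn_ord x; lia.
  have := incr (Ordinal m_lt); have := IH (lo (Ordinal m_lt)) erefl.
  have -> : hi (Ordinal m_lt) = x by apply: val_inj; rewrite /= ex.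
  lia.
have le_id k (x : 'I_n) : x + k = n.-1 -> p x <= x.
  elim: k x => [|k IH] x ex; first by have := ltn_ord (p x); lia.
  have x_lt : x < n.-1 by lia.
  have := incr (Ordinal x_lt); have := IH (hi (Ordinal x_lt)) ltac:(rewrite /=; lia).
  have -> : lo (Ordinal x_lt) = x by apply: val_inj.
  rewrite /=; lia.
have p1 : p = 1%g.
  apply/permP => x; apply: val_inj; rewrite perm1 /=.
  have x_le : x + (n.-1 - x) = n.-1 by have := ltn_ord x; lia.
  by have := ge_id _ x erefl; have := le_id _ x x_le; lia.
by rewrite -(invgK w) -/p p1 invg1.
Qed.

Lemma exists_reduced_word (w : 'S_n) :
  exists t : seq I, (wprod t == w) && (size t == perm_length w).
Proof.
move Ek : (perm_length w) => k; elim: k w Ek => [|k IH] w Ek.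
  exists [::]; rewrite /= eqxx andbT eq_sym; apply/eqP/no_descent_eq1 => i.
  by have := perm_length_sgen w i; rewrite Ek; case: (descent w i) => //; lia.
have [i desc] : exists i, descent w i.
  apply/existsP; apply: contraT; rewrite negb_exists => /forallP asc.
  by move: Ek; rewrite (no_descent_eq1 (fun i => asc i)) perm_length1.
have [t /andP [/eqP wt /eqP st]] := IH (w * s i)%g
  ltac:(have := perm_length_sgen w i; rewrite desc Ek; lia).
by exists (i :: t); rewrite /= wt mulg_sgenK st !eqxx.
Qed.

Lemma reduced_exprP (w : 'S_n) (t : seq I) :
  reduced_expr w t <-> wprod t = w /\ size t = perm_length w.
Proof.
split=> [[wt min_t] | [wt st]]; last first.
  by split=> // t' wt'; have := perm_length_wprod t'; rewrite wt'; lia.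
split=> //; have [t0 /andP [/eqP wt0 /eqP st0]] := exists_reduced_word w.
by have := min_t t0 wt0; have := perm_length_wprod t; rewrite wt; lia.
Qed.

Lemma reduced_expr_size (w : 'S_n) (t : seq I) : reduced_expr w t -> size t = perm_length w.
Proof. by case/reduced_exprP. Qed.

Definition reduced_word (w : 'S_n) : seq I := xchoose (exists_reduced_word w).

Lemma reduced_wordP (w : 'S_n) : reduced_expr w (reduced_word w).
Proof.
by have /andP [/eqP wt /eqP st] := xchooseP (exists_reduced_word w); apply/reduced_exprP.
Qed.

Lemma reduced_expr_cons (w : 'S_n) (i : I) (t : seq I) :
  descent w i -> reduced_expr (w * s i)%g t -> reduced_expr w (i :: t).
Proof.
move=> desc /reduced_exprP [wt st]; apply/reduced_exprP; rewrite /= wt mulg_sgenK.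
by split=> //; have := perm_length_sgen w i; rewrite desc st; lia.
Qed.

Lemma reduced_expr_consE (w : 'S_n) (i : I) (t : seq I) :
  reduced_expr w (i :: t) -> descent w i /\ reduced_expr (w * s i)%g t.
Proof.
case/reduced_exprP => /= <- st; rewrite mulg_sgenK descent_sgen.
have := perm_length_sgen (wprod t) i; have := perm_length_wprod t.
case: (descent (wprod t) i) => /= le_t len_ti; first lia.
by split=> //; apply/reduced_exprP; split=> //; lia.
Qed.

Lemma descent_far (w : 'S_n) (i j : I) : far i j -> descent (w * s j)%g i = descent w i.
Proof. by move=> ij; apply: descent_mulg; [exact: sgen_far_lo | exact: sgen_far_hi]. Qed.

Section Adjacent.
Variables (i j : I).
Hypothesis ij : j = i.+1 :> nat.

Lemma descent_braidl (w : 'S_n) : descent (w * s j * s i)%g j = descent w i.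
Proof.
rewrite -mulgA; apply: descent_mulg; rewrite permM.
  by rewrite sgen_next_lo // sgenL (hi_lo_next ij).
by rewrite (hi_lo_next ij) sgenL sgen_prev_hi.
Qed.

Lemma descent_braidr (w : 'S_n) : descent (w * s i * s j)%g i = descent w j.
Proof.
rewrite -mulgA; apply: descent_mulg; rewrite permM.
  by rewrite -(hi_lo_next ij) sgenR sgen_next_lo.
by rewrite sgen_prev_hi // sgenR (hi_lo_next ij).
Qed.

Lemma descent_next_swap (w : 'S_n) : descent (w * s j)%g i = descent (w * s i)%g j.
Proof. by rewrite -{1}(mulg_sgenK i w) descent_braidr. Qed.

Lemma descent_next (w : 'S_n) : descent w i -> descent w j -> descent (w * s i)%g j.
Proof.
rewrite /descent invMg !permM sgenV sgen_prev_hi // -(hi_lo_next ij) sgenR.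
by move=> Di Dj; exact: ltn_trans Dj Di.
Qed.

End Adjacent.

End SymmetricGroup.

Section ReducedWords.
Variables (n : nat) (R : pzRingType) (tau : 'I_n.-1 -> R).
Local Notation I := 'I_n.-1.
Local Notation s := (@sgen n).
Local Notation F := (tau_word tau).
Hypothesis tau_far : forall i j : I, far i j -> (tau i * tau j = tau j * tau i)%R.
Hypothesis tau_braid : forall i j : I, j = i.+1 :> nat ->
  (tau j * tau i * tau j = tau i * tau j * tau i)%R.

Lemma tau_word_cons (i : I) (t : seq I) : F (i :: t) = (tau i * F t)%R.
Proof. by rewrite /tau_word big_cons. Qed.

Lemma braid_words (w : 'S_n) (i j : I) : i < j -> descent w i -> descent w j ->
  exists r1 r2, [/\ reduced_expr (w * s i)%g r1, reduced_expr (w * s j)%g r2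
                  & (tau i * F r1 = tau j * F r2)%R].
Proof.
move=> lt_ij Di Dj; have [far_ij | ij] : far i j \/ j = i.+1 :> nat by rewrite /far; lia.
  have red_r := reduced_wordP (w * s i * s j)%g; set r := reduced_word _ in red_r.
  exists (j :: r), (i :: r); split.
  - by apply: reduced_expr_cons => //; rewrite descent_far // far_sym.
  - apply: reduced_expr_cons; first by rewrite descent_far.
    by rewrite -mulgA -sgen_comm // mulgA.
  - by rewrite !tau_word_cons !mulrA tau_far.
have red_r := reduced_wordP (w * s i * s j * s i)%g; set r := reduced_word _ in red_r.
exists (j :: i :: r), (i :: j :: r); split.
- apply: reduced_expr_cons; first exact: descent_next.
  by apply: reduced_expr_cons; first by rewrite descent_braidr.
- apply: reduced_expr_cons; first by rewrite descent_next_swap // descent_next.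
  apply: reduced_expr_cons; first by rewrite descent_braidl.
  by rewrite -!mulgA [(s j * (s i * s j))%g]mulgA sgen_braid // !mulgA.
- by rewrite !tau_word_cons !mulrA (tau_braid ij).
Qed.

Lemma tau_word_reduced (w : 'S_n) (t1 t2 : seq I) :
  reduced_expr w t1 -> reduced_expr w t2 -> F t1 = F t2.
Proof.
move Ek : (perm_length w) => k; elim/ltn_ind: k w Ek t1 t2 => k IH w Ek t1 t2 red1 red2.
have shorter i (t t' : seq I) : descent w i ->
    reduced_expr (w * s i)%g t -> reduced_expr (w * s i)%g t' -> F t = F t'.
  move=> Di; apply: (IH (perm_length (w * s i)%g)) => //.
  by have := perm_length_sgen w i; rewrite Di Ek; lia.
case: t1 red1 => [|i t1] red1; case: t2 red2 => [|j t2] red2 //.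
  1,2: by move: (reduced_expr_size red1) (reduced_expr_size red2) => /= s1 s2; exfalso; lia.
have [Di {}red1] := reduced_expr_consE red1; have [Dj {}red2] := reduced_expr_consE red2.
rewrite !tau_word_cons; case: (ltngtP i j) => [lt_ij | lt_ji | /val_inj eq_ij].
- have [u1 [u2 [ru1 ru2 eq_u]]] := braid_words lt_ij Di Dj.
  by rewrite (shorter _ _ _ Di red1 ru1) eq_u (shorter _ _ _ Dj ru2 red2).
- have [u2 [u1 [ru2 ru1 eq_u]]] := braid_words lt_ji Dj Di.
  by rewrite (shorter _ _ _ Di red1 ru1) -eq_u (shorter _ _ _ Dj ru2 red2).
- by move: red2; rewrite -eq_ij => red2; rewrite (shorter _ _ _ Di red1 red2).
Qed.

End ReducedWords.

Local Open Scope ring_scope.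

Section RingHom.
Variables (R S : pzRingType) (g : R -> S).
Hypothesis g_hom : is_ringhom g.

Lemma ringhomD x y : g (x + y) = g x + g y.
Proof. by case: g_hom. Qed.

Lemma ringhomM x y : g (x * y) = g x * g y.
Proof. by case: g_hom => _ []. Qed.

Lemma ringhom1 : g 1 = 1.
Proof. by case: g_hom => _ []. Qed.

Lemma ringhom0 : g 0 = 0.
Proof. by apply: (@addrI _ (g 0)); rewrite -ringhomD !addr0. Qed.

Lemma ringhomN x : g (- x) = - g x.
Proof. by apply: (@addrI _ (g x)); rewrite -ringhomD !subrr ringhom0. Qed.

Lemma ringhom_sum (I : Type) (r : seq I) (P : pred I) (F : I -> R) :
  g (\sum_(i <- r | P i) F i) = \sum_(i <- r | P i) g (F i).
Proof. exact: (big_morph g ringhomD ringhom0). Qed.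

End RingHom.

Lemma ringhom_comp (R S T : pzRingType) (g : R -> S) (h : S -> T) :
  is_ringhom g -> is_ringhom h -> is_ringhom (h \o g).
Proof.
move=> g_hom h_hom; split; [|split].
- by move=> x y /=; rewrite (ringhomD g_hom) (ringhomD h_hom).
- by move=> x y /=; rewrite (ringhomM g_hom) (ringhomM h_hom).
- by rewrite /= (ringhom1 g_hom) (ringhom1 h_hom).
Qed.

Lemma ringhom_id (R : pzRingType) : is_ringhom (@id R).
Proof. by []. Qed.

Section RingAction.
Variables (n : nat) (A : pzRingType) (act : 'S_n -> A -> A).
Hypothesis act_action : is_ring_action act.

Lemma act_ringhom (w : 'S_n) : is_ringhom (act w).
Proof. by case: act_action. Qed.

Lemma act1 (x : A) : act 1%g x = x.
Proof. by case: act_action => _ []. Qed.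

Lemma actM (u v : 'S_n) (x : A) : act (u * v)%g x = act v (act u x).
Proof. by case: act_action => _ []. Qed.

Lemma actK (w : 'S_n) : cancel (act w) (act (w^-1)%g).
Proof. by move=> x; rewrite -actM mulgV act1. Qed.

Lemma actVK (w : 'S_n) : cancel (act (w^-1)%g) (act w).
Proof. by move=> x; rewrite -actM mulVg act1. Qed.

Lemma act_central (w : 'S_n) (y : A) :
  (forall z, y * z = z * y) -> forall z, act w y * z = z * act w y.
Proof.
move=> y_central z; have hom := act_ringhom w.
by rewrite -(actVK w z) -!(ringhomM hom) y_central.
Qed.

End RingAction.

Section Relations.
Variables (n : nat) (A : pzRingType) (act : 'S_n -> A -> A) (a : 'I_n.-1 -> A).

Lemma tau_relations_hom (S T : pzRingType) (h : S -> T) (f : A -> S) (t : 'I_n.-1 -> S) :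
  is_ringhom h -> tau_relations act a f t -> tau_relations act a (h \o f) (h \o t).
Proof.
move=> h_hom [f_hom t_f t_far t_braid t_sq]; split=> /=.
- exact: ringhom_comp.
- by move=> i x; rewrite -!(ringhomM h_hom) t_f.
- by move=> i j ij; rewrite -!(ringhomM h_hom) t_far.
- by move=> i j ij; rewrite -!(ringhomM h_hom) t_braid.
- by move=> i; rewrite -(ringhomM h_hom) t_sq.
Qed.

Lemma tau_relations_inj (S T : pzRingType) (h : S -> T) (f : A -> S) (t : 'I_n.-1 -> S) :
  is_ringhom h -> injective h ->
  tau_relations act a (h \o f) (h \o t) -> tau_relations act a f t.
Proof.
move=> h_hom h_inj [hf_hom t_f t_far t_braid t_sq].
split; [split; [|split] | | | |].
- by move=> x y; apply: h_inj; rewrite (ringhomD h_hom); exact: (ringhomD hf_hom).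
- by move=> x y; apply: h_inj; rewrite (ringhomM h_hom); exact: (ringhomM hf_hom).
- by apply: h_inj; rewrite (ringhom1 h_hom); exact: (ringhom1 hf_hom).
- by move=> i x; apply: h_inj; rewrite !(ringhomM h_hom); exact: t_f.
- by move=> i j ij; apply: h_inj; rewrite !(ringhomM h_hom); exact: t_far.
- by move=> i j ij; apply: h_inj; rewrite !(ringhomM h_hom); exact: t_braid.
- by move=> i; apply: h_inj; rewrite !(ringhomM h_hom); exact: t_sq.
Qed.

End Relations.

Definition decide (P : Prop) : bool := if excluded_middle_informative P then true else false.

Lemma decideP (P : Prop) : reflect P (decide P).
Proof. by rewrite /decide; case: excluded_middle_informative => p; constructor. Qed.

Lemma inj_surj_bijective (T U : Type) (f : T -> U) :
  injective f -> (forall u, exists t, f t = u) -> bijective f.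
Proof.
move=> f_inj f_surj.
pose g u := proj1_sig (constructive_indefinite_description _ (f_surj u)).
have fgK : cancel g f.
  by move=> u; exact: proj2_sig (constructive_indefinite_description _ (f_surj u)).
by exists g => // t; apply: f_inj; rewrite fgK.
Qed.

Section PresentedRing.
Variables (n : nat) (A : pzRingType) (act : 'S_n -> A -> A) (a : 'I_n.-1 -> A).
Variables (R : pzRingType) (iota : A -> R) (tau : 'I_n.-1 -> R).
Hypothesis R_presented : is_presented_ring act a iota tau.

Lemma presented_relations : tau_relations act a iota tau.
Proof. by case: R_presented. Qed.

Lemma presented_hom_eq (S : pzRingType) (g1 g2 : R -> S) :
  is_ringhom g1 -> is_ringhom g2 ->
  (forall x, g1 (iota x) = g2 (iota x)) -> (forall i, g1 (tau i) = g2 (tau i)) ->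
  g1 =1 g2.
Proof.
move=> g1_hom g2_hom e_iota e_tau.
have rel := tau_relations_hom g2_hom presented_relations.
case: R_presented => _ /(_ S _ _ rel) [g [_ g_uniq]] r.
by rewrite (g_uniq g1) ?(g_uniq g2).
Qed.

Section Generation.
Variable P : R -> Prop.
Hypotheses (P1 : P 1) (PB : forall x y, P x -> P y -> P (x - y))
  (PM : forall x y, P x -> P y -> P (x * y))
  (P_iota : forall x, P (iota x)) (P_tau : forall i, P (tau i)).

Lemma decide_subring_closed : GRing.subring_closed (fun r => decide (P r)).
Proof.
split; first exact/decideP.
- by move=> x y /decideP Px /decideP Py; apply/decideP; exact: PB.
- by move=> x y /decideP Px /decideP Py; apply/decideP; exact: PM.
Qed.

Definition generated := {r : R | decide (P r)}.
HB.instance Definition _ := [isSub for (@proj1_sig R _ : generated -> R)].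
HB.instance Definition _ := [Choice of generated by <:].
HB.instance Definition _ :=
  GRing.SubChoice_isSubPzRing.Build R _ generated decide_subring_closed.

Lemma presented_ring_ind (r : R) : P r.
Proof.
pose f x : generated := exist _ (iota x) (introT (decideP _) (P_iota x)).
pose t i : generated := exist _ (tau i) (introT (decideP _) (P_tau i)).
have val_hom : is_ringhom (val : generated -> R) by [].
have rel : tau_relations act a f t.
  exact: (tau_relations_inj (f := f) (t := t) val_hom val_inj presented_relations).
case: R_presented => _ /(_ _ f t rel) [g [[g_hom [g_iota g_tau]] _]].
have val_g : val \o g =1 id.
  apply: (presented_hom_eq (g1 := val \o g) (g2 := id)).
  - exact: ringhom_comp.
  - exact: ringhom_id.
  - by move=> x /=; rewrite g_iota.
  - by move=> i /=; rewrite g_tau.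
by rewrite -(val_g r); apply/decideP; exact: (valP (g r)).
Qed.

End Generation.
End PresentedRing.

Section KernelMatrices.
Variables (A : pzRingType) (T : finType).

Definition kernel_mx (K : T -> T -> A) : 'M[A]_#|T| :=
  \matrix_(i, j) K (enum_val i) (enum_val j).

Definition kernel_mul (K L : T -> T -> A) (u w : T) : A := \sum_v K u v * L v w.

Lemma kernel_mxE (K : T -> T -> A) (u w : T) :
  kernel_mx K (enum_rank u) (enum_rank w) = K u w.
Proof. by rewrite mxE !enum_rankK. Qed.

Lemma sum_enum_rank (F : 'I_#|T| -> A) : \sum_k F k = \sum_v F (enum_rank v).
Proof. exact: (reindex enum_rank (onW_bij _ (enum_rank_bij T))). Qed.

Lemma eq_kernel_mx (K L : T -> T -> A) :
  (forall u w, K u w = L u w) -> kernel_mx K = kernel_mx L.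
Proof. by move=> KL; apply/matrixP => i j; rewrite !mxE KL. Qed.

Lemma kernel_mxD (K L : T -> T -> A) :
  kernel_mx K + kernel_mx L = kernel_mx (fun u w => K u w + L u w).
Proof. by apply/matrixP => i j; rewrite !mxE. Qed.

Lemma kernel_mxM (K L : T -> T -> A) :
  kernel_mx K * kernel_mx L = kernel_mx (kernel_mul K L).
Proof.
apply/matrixP => i j; rewrite -mulmxE !mxE sum_enum_rank /kernel_mul.
by apply: eq_bigr => v _; rewrite !mxE enum_rankK.
Qed.

Lemma kernel_mx1 (K : T -> T -> A) : (forall u w, K u w = (u == w)%:R) -> kernel_mx K = 1.
Proof. by move=> K1; apply/matrixP => i j; rewrite !mxE K1 (inj_eq enum_val_inj). Qed.

Lemma kernel_mxMl (K : T -> T -> A) (M : 'M[A]_#|T|) (u w : T) :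
  (kernel_mx K * M) (enum_rank u) (enum_rank w) =
  \sum_v K u v * M (enum_rank v) (enum_rank w).
Proof. by rewrite -mulmxE !mxE sum_enum_rank; apply: eq_bigr => v _; rewrite kernel_mxE. Qed.

Lemma sum_pred1 (F : T -> A) (x : T) : \sum_v (if v == x then F v else 0) = F x.
Proof. by rewrite -big_mkcond big_pred1_eq. Qed.

End KernelMatrices.

Section Model.
Variables (n : nat) (A : pzRingType) (act : 'S_n -> A -> A) (a : 'I_n.-1 -> A).
Local Notation I := 'I_n.-1.
Local Notation s := (@sgen n).
Hypothesis act_action : is_ring_action act.
Hypothesis a_central : forall (i : I) (x : A), a i * x = x * a i.
Hypothesis a_equivariant : forall (w : 'S_n) (i j : I),
  w @: [set sgen_lo i; sgen_hi i] = [set sgen_lo j; sgen_hi j] -> act w (a i) = a j.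

Lemma act_sgen_a (i : I) : act (s i) (a i) = a i.
Proof.
apply: a_equivariant; rewrite imsetU1 imset_set1 sgenL sgenR.
by apply/setP => x; rewrite !inE orbC.
Qed.

Lemma act_far_a (i j : I) : far i j -> act (s j) (a i) = a i.
Proof.
by move=> ij; apply: a_equivariant; rewrite imsetU1 imset_set1 sgen_far_lo // sgen_far_hi.
Qed.

Lemma act_next_a (i j : I) : j = i.+1 :> nat -> act (s j) (a i) = act (s i) (a j).
Proof.
move=> ij; have <- : act (s j * s i)%g (a i) = a j.
  apply: a_equivariant; rewrite imsetU1 imset_set1 !permM sgen_next_lo //.
  by rewrite (hi_lo_next ij) !sgenL sgen_prev_hi // (hi_lo_next ij).
by rewrite -(actM act_action) mulg_sgenK.
Qed.

Lemma act_sgenK (i : I) : involutive (act (s i)).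
Proof. by move=> x; rewrite -(actM act_action) sgen2 (act1 act_action). Qed.

Lemma act_invMg_sgen (w : 'S_n) (i : I) (x : A) :
  act ((w * s i)^-1)%g x = act (w^-1)%g (act (s i) x).
Proof. by rewrite invMg sgenV (actM act_action). Qed.

Definition tau_coef (i : I) (v : 'S_n) : A :=
  if descent v i then act (v^-1)%g (a i) else 1.

Lemma tau_coef_central (i : I) (v : 'S_n) (z : A) : tau_coef i v * z = z * tau_coef i v.
Proof.
rewrite /tau_coef; case: descent; first exact: (act_central act_action).
by rewrite mul1r mulr1.
Qed.

Lemma tau_coef_far (i j : I) (w : 'S_n) : far i j -> tau_coef i (w * s j)%g = tau_coef i w.
Proof. by move=> ij; rewrite /tau_coef descent_far // act_invMg_sgen act_far_a. Qed.

Section Adjacent.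
Variables (i j : I).
Hypothesis ij : j = i.+1 :> nat.

Lemma tau_coef_braidl (w : 'S_n) : tau_coef j (w * s j * s i)%g = tau_coef i w.
Proof.
rewrite /tau_coef descent_braidl // !act_invMg_sgen -(act_next_a ij).
by rewrite act_sgenK.
Qed.

Lemma tau_coef_braidr (w : 'S_n) : tau_coef i (w * s i * s j)%g = tau_coef j w.
Proof.
by rewrite /tau_coef descent_braidr // !act_invMg_sgen (act_next_a ij) act_sgenK.
Qed.

Lemma tau_coef_next_swap (w : 'S_n) : tau_coef i (w * s j)%g = tau_coef j (w * s i)%g.
Proof. by rewrite /tau_coef descent_next_swap // !act_invMg_sgen (act_next_a ij). Qed.

End Adjacent.

(* Left multiplication in the coordinates [r = \sum_u tau_u * iota (b u)] of the
   presented ring: [iota x * tau_u = tau_u * iota (u^-1 x)] and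
   [tau i * tau_v = tau_(v * s i) * iota (tau_coef i v)]. *)
Definition iota_kernel (x : A) (u w : 'S_n) : A := if u == w then act (u^-1)%g x else 0.
Definition tau_kernel (i : I) (u w : 'S_n) : A :=
  if u == (w * s i)%g then tau_coef i w else 0.

Definition model_iota (x : A) : 'M[A]_#|{perm 'I_n}| := kernel_mx (iota_kernel x).
Definition model_tau (i : I) : 'M[A]_#|{perm 'I_n}| := kernel_mx (tau_kernel i).

Lemma kernel_mul_iota (x : A) (L : 'S_n -> 'S_n -> A) (u w : 'S_n) :
  kernel_mul (iota_kernel x) L u w = act (u^-1)%g x * L u w.
Proof.
rewrite /kernel_mul -(sum_pred1 (fun v => act (u^-1)%g x * L v w) u).
by apply: eq_bigr => v _; rewrite /iota_kernel eq_sym; case: eqP => [->|_] //; rewrite mul0r.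
Qed.

Lemma kernel_mul_tau (i : I) (L : 'S_n -> 'S_n -> A) (u w : 'S_n) :
  kernel_mul (tau_kernel i) L u w = tau_coef i (u * s i)%g * L (u * s i)%g w.
Proof.
rewrite /kernel_mul -(sum_pred1 (fun v => tau_coef i v * L v w) (u * s i)%g).
by apply: eq_bigr => v _; rewrite /tau_kernel eq_mulg_sgen; case: eqP => _ //; rewrite mul0r.
Qed.

Lemma model_iota_ringhom : is_ringhom model_iota.
Proof.
have hom w := act_ringhom act_action w.
split; [|split].
- move=> x y; rewrite /model_iota kernel_mxD; apply: eq_kernel_mx => u w.
  by rewrite /iota_kernel; case: eqP => _; rewrite ?(ringhomD (hom _)) ?addr0.
- move=> x y; rewrite /model_iota kernel_mxM; apply: eq_kernel_mx => u w.
  by rewrite kernel_mul_iota /iota_kernel; case: eqP => _; rewrite ?(ringhomM (hom _)) ?mulr0.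
- by apply: kernel_mx1 => u w; rewrite /iota_kernel; case: eqP => _; rewrite ?(ringhom1 (hom _)).
Qed.

Lemma model_tau_iota (i : I) (x : A) :
  model_tau i * model_iota x = model_iota (act (s i) x) * model_tau i.
Proof.
rewrite /model_iota /model_tau !kernel_mxM; apply: eq_kernel_mx => u w.
rewrite kernel_mul_tau kernel_mul_iota /iota_kernel /tau_kernel -eq_mulg_sgen [w == _]eq_sym.
case: eqP => [<-|_]; last by rewrite !mulr0.
by rewrite act_invMg_sgen tau_coef_central.
Qed.

Lemma model_tau_far (i j : I) : far i j -> model_tau i * model_tau j = model_tau j * model_tau i.
Proof.
move=> ij; have ji : far j i by rewrite far_sym.
rewrite /model_tau !kernel_mxM; apply: eq_kernel_mx => u w.
rewrite !kernel_mul_tau /tau_kernel !eq_mulg_sgenr -!mulgA (sgen_comm ij).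
case: eqP => [->|_]; last by rewrite !mulr0.
rewrite !mulgA mulg_sgenK -mulgA (sgen_comm ji) mulgA mulg_sgenK.
by rewrite (tau_coef_far _ ij) (tau_coef_far _ ji) tau_coef_central.
Qed.

Lemma model_tau_braid (i j : I) : j = i.+1 :> nat ->
  model_tau j * model_tau i * model_tau j = model_tau i * model_tau j * model_tau i.
Proof.
move=> ij; rewrite /model_tau -!mulrA !kernel_mxM; apply: eq_kernel_mx => u w.
rewrite !kernel_mul_tau /tau_kernel !eq_mulg_sgenr.
have braid : (w * s j * s i * s j = w * s i * s j * s i)%g.
  by rewrite -!mulgA [(s j * (s i * s j))%g]mulgA (sgen_braid ij) !mulgA.
rewrite braid; case: eqP => [->|_]; last by rewrite !mulr0.
rewrite -[in LHS]braid !mulg_sgenK.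
rewrite (tau_coef_braidl ij) (tau_coef_braidr ij) (tau_coef_next_swap ij).
by rewrite (tau_coef_central i w) (tau_coef_central j w) -!mulrA (tau_coef_central j w).
Qed.

Lemma model_tau_sq (i : I) : model_tau i * model_tau i = model_iota (a i).
Proof.
rewrite /model_tau /model_iota kernel_mxM; apply: eq_kernel_mx => u w.
rewrite kernel_mul_tau /tau_kernel /iota_kernel eq_mulg_sgenr mulg_sgenK.
case: eqP => [->|_]; last by rewrite mulr0.
rewrite /tau_coef descent_sgen; case: (descent w i) => /=; first by rewrite mul1r.
by rewrite mulr1 act_invMg_sgen act_sgen_a.
Qed.

Lemma model_relations : tau_relations act a model_iota model_tau.
Proof.
split; [exact: model_iota_ringhom | exact: model_tau_iota | exact: model_tau_far |
        exact: model_tau_braid | exact: model_tau_sq].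
Qed.

End Model.

Section TauBasis.
Variables (n : nat) (A : pzRingType) (act : 'S_n -> A -> A) (a : 'I_n.-1 -> A).
Local Notation I := 'I_n.-1.
Local Notation s := (@sgen n).
Variables (R : pzRingType) (iota : A -> R) (tau : I -> R).
Hypothesis tau_rel : tau_relations act a iota tau.
Local Notation F := (tau_word tau).

Lemma iota_ringhom : is_ringhom iota.
Proof. by case: tau_rel. Qed.

Lemma tau_iota (i : I) (x : A) : tau i * iota x = iota (act (s i) x) * tau i.
Proof. by case: tau_rel. Qed.

Lemma tau_far (i j : I) : far i j -> tau i * tau j = tau j * tau i.
Proof. by case: tau_rel => _ _ + _ _; apply. Qed.

Lemma tau_braid (i j : I) : j = i.+1 :> nat -> tau j * tau i * tau j = tau i * tau j * tau i.
Proof. by case: tau_rel => _ _ _ + _; apply. Qed.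

Lemma tau_sq (i : I) : tau i * tau i = iota (a i).
Proof. by case: tau_rel. Qed.

Definition tau_perm (w : 'S_n) : R := F (reduced_word w).

Lemma tau_perm_reduced (w : 'S_n) (t : seq I) : reduced_expr w t -> tau_perm w = F t.
Proof. exact: (tau_word_reduced tau_far tau_braid (reduced_wordP w)). Qed.

Lemma tau_perm1 : tau_perm 1 = 1.
Proof.
have red1 : reduced_expr (1%g : 'S_n) [::] by [].
by rewrite (tau_perm_reduced red1) /tau_word big_nil.
Qed.

Lemma tau_mul_ascent (w : 'S_n) (i : I) :
  ~~ descent w i -> tau i * tau_perm w = tau_perm (w * s i)%g.
Proof.
move=> asc; rewrite -tau_word_cons; symmetry; apply: tau_perm_reduced.
apply: reduced_expr_cons; first by rewrite descent_sgen.
by rewrite mulg_sgenK; exact: reduced_wordP.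
Qed.

Lemma tau_mul_descent (w : 'S_n) (i : I) :
  descent w i -> tau i * tau_perm w = iota (a i) * tau_perm (w * s i)%g.
Proof.
move=> desc; have asc : ~~ descent (w * s i)%g i by rewrite descent_sgen desc.
by rewrite -{1}(mulg_sgenK i w) -(tau_mul_ascent asc) mulrA tau_sq.
Qed.

Definition tau_expand (c : {ffun 'S_n -> A}) : R := \sum_w iota (c w) * tau_perm w.

Lemma tau_expand0 : tau_expand 0 = 0.
Proof. by rewrite /tau_expand big1 // => w _; rewrite ffunE (ringhom0 iota_ringhom) mul0r. Qed.

Lemma tau_expandD (c d : {ffun 'S_n -> A}) : tau_expand (c + d) = tau_expand c + tau_expand d.
Proof.
rewrite /tau_expand -big_split; apply: eq_bigr => w _.
by rewrite ffunE (ringhomD iota_ringhom) mulrDl.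
Qed.

Lemma tau_expandN (c : {ffun 'S_n -> A}) : tau_expand (- c) = - tau_expand c.
Proof.
rewrite /tau_expand -sumrN; apply: eq_bigr => w _.
by rewrite ffunE (ringhomN iota_ringhom) mulNr.
Qed.

Lemma iota_mul_expand (x : A) (c : {ffun 'S_n -> A}) :
  iota x * tau_expand c = tau_expand [ffun w => x * c w].
Proof.
rewrite /tau_expand mulr_sumr; apply: eq_bigr => w _.
by rewrite ffunE (ringhomM iota_ringhom) mulrA.
Qed.

Lemma tau_mul_expand (i : I) (c : {ffun 'S_n -> A}) :
  tau i * tau_expand c = tau_expand
    [ffun u => act (s i) (c (u * s i)%g) * (if descent (u * s i)%g i then a i else 1)].
Proof.
rewrite /tau_expand mulr_sumr [RHS](reindex_inj (mulIg (s i))) /=.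
apply: eq_bigr => w _; rewrite ffunE mulg_sgenK mulrA tau_iota -mulrA.
case: (boolP (descent w i)) => [desc | asc].
  by rewrite (tau_mul_descent desc) mulrA (ringhomM iota_ringhom).
by rewrite (tau_mul_ascent asc) mulr1.
Qed.

Lemma tau_word_mul_expand (t : seq I) (c : {ffun 'S_n -> A}) :
  exists d, F t * tau_expand c = tau_expand d.
Proof.
elim: t c => [|i t IH] c; first by exists c; rewrite /tau_word big_nil mul1r.
have [d d_eq] := IH c.
by rewrite tau_word_cons -mulrA d_eq tau_mul_expand; eexists.
Qed.

Lemma tau_expand_mul (c d : {ffun 'S_n -> A}) :
  exists e, tau_expand c * tau_expand d = tau_expand e.
Proof.
rewrite {1}/tau_expand mulr_suml.
apply: (big_ind (fun r => exists e, r = tau_expand e)).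
- by exists 0; rewrite tau_expand0.
- by move=> _ _ [e1 ->] [e2 ->]; exists (e1 + e2); rewrite tau_expandD.
move=> w _; have [e e_w] := tau_word_mul_expand (reduced_word w) d.
by exists [ffun v => c w * e v]; rewrite -iota_mul_expand -e_w mulrA.
Qed.

Lemma tau_expand1 : tau_expand [ffun w => (w == 1%g)%:R] = 1.
Proof.
rewrite /tau_expand (bigD1 1%g) //= big1 ?addr0.
  by rewrite ffunE eqxx (ringhom1 iota_ringhom) tau_perm1 mulr1.
by move=> w /negbTE w1; rewrite ffunE w1 (ringhom0 iota_ringhom) mul0r.
Qed.

End TauBasis.

Section TauBasisPresented.
Variables (n : nat) (A : pzRingType) (act : 'S_n -> A -> A) (a : 'I_n.-1 -> A).
Hypothesis act_action : is_ring_action act.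
Variables (R : pzRingType) (iota : A -> R) (tau : 'I_n.-1 -> R).
Hypothesis R_presented : is_presented_ring act a iota tau.
Local Notation tau_rel := (presented_relations R_presented).
Local Notation tau_expand := (tau_expand iota tau).

Lemma tau_expand_surj (r : R) : exists c, tau_expand c = r.
Proof.
have [e1 e1_eq] : exists e, tau_expand e = 1 by eexists; exact: (tau_expand1 tau_rel).
apply: (presented_ring_ind R_presented (P := fun r => exists c, tau_expand c = r)).
- by exists e1.
- move=> _ _ [c <-] [d <-]; exists (c - d).
  by rewrite (tau_expandD tau_rel) (tau_expandN tau_rel).
- by move=> _ _ [c <-] [d <-]; have [e ->] := tau_expand_mul tau_rel c d; exists e.
- by move=> x; have := iota_mul_expand tau_rel x e1; rewrite e1_eq mulr1 => ->; eexists.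
- by move=> i; have := tau_mul_expand tau_rel i e1; rewrite e1_eq mulr1 => ->; eexists.
Qed.

Hypothesis a_central : forall (i : 'I_n.-1) (x : A), a i * x = x * a i.
Hypothesis a_equivariant : forall (w : 'S_n) (i j : 'I_n.-1),
  w @: [set sgen_lo i; sgen_hi i] = [set sgen_lo j; sgen_hi j] -> act w (a i) = a j.

Section ModelColumn.
Variable g : R -> 'M[A]_#|{perm 'I_n}|.
Hypotheses (g_hom : is_ringhom g) (g_iota : forall x, g (iota x) = model_iota act x)
  (g_tau : forall i, g (tau i) = model_tau act a i).

Lemma model_tau_word_col (v u : 'S_n) (t : seq 'I_n.-1) : reduced_expr v t ->
  g (tau_word tau t) (enum_rank u) (enum_rank 1%g) = (u == v)%:R.
Proof.
elim: t v u => [|i t IH] v u red.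
  by case: red => /= <- _; rewrite /tau_word big_nil (ringhom1 g_hom) mxE (inj_eq enum_rank_inj).
have [desc {}red] := reduced_expr_consE red.
rewrite tau_word_cons (ringhomM g_hom) g_tau /model_tau kernel_mxMl.
under eq_bigr => x _ do rewrite (IH _ _ red) mulr_natr mulrb.
rewrite sum_pred1 /tau_kernel mulg_sgenK /tau_coef descent_sgen desc.
by case: eqP.
Qed.

Lemma model_expand_col (c : {ffun 'S_n -> A}) (w : 'S_n) :
  g (tau_expand c) (enum_rank w) (enum_rank 1%g) = act (w^-1)%g (c w).
Proof.
rewrite (ringhom_sum g_hom) summxE.
under eq_bigr => v _ do rewrite (ringhomM g_hom) g_iota kernel_mxMl.
under eq_bigr => v _ do under eq_bigr => x _ do
  rewrite (model_tau_word_col _ (reduced_wordP v)) mulr_natr mulrb.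
under eq_bigr => v _ do rewrite sum_pred1 /iota_kernel eq_sym.
by rewrite sum_pred1.
Qed.

End ModelColumn.

Lemma tau_expand_inj : injective tau_expand.
Proof.
have [g [[g_hom [g_iota g_tau]] _]] :=
  R_presented.2 _ _ _ (model_relations act_action a_central a_equivariant).
move=> c d cd; apply/ffunP => w; apply: (can_inj (actK act_action (w^-1)%g)).
by rewrite -!(model_expand_col g_hom g_iota g_tau) cd.
Qed.

End TauBasisPresented.

Theorem mainTheorem8 (n : nat) (A : pzRingType) (act : 'S_n -> A -> A)
  (a : 'I_n.-1 -> A)
  (Hact : is_ring_action act)
  (Hcent : forall (i : 'I_n.-1) (x : A), a i * x = x * a i)
  (Hequiv : forall (w : 'S_n) (i j : 'I_n.-1),
      w @: [set sgen_lo i; sgen_hi i] = [set sgen_lo j; sgen_hi j] ->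
      act w (a i) = a j)
  (R : pzRingType) (iota : A -> R) (tau : 'I_n.-1 -> R)
  (HR : is_presented_ring act a iota tau) :
  (forall w : 'S_n, exists s, reduced_expr w s) /\
  (forall (w : 'S_n) (s1 s2 : seq 'I_n.-1),
      reduced_expr w s1 -> reduced_expr w s2 -> tau_word tau s1 = tau_word tau s2) /\
  (exists T : 'S_n -> R,
      (forall (w : 'S_n) s, reduced_expr w s -> T w = tau_word tau s) /\
      bijective (fun c : {ffun 'S_n -> A} => \sum_(w : 'S_n) iota (c w) * T w)).
Proof.
have tau_rel := presented_relations HR.
split; first by move=> w; exists (reduced_word w); exact: reduced_wordP.
split; first exact: tau_word_reduced (tau_far tau_rel) (tau_braid tau_rel).
exists (tau_perm tau); split; first exact: tau_perm_reduced tau_rel.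
change (bijective (tau_expand iota tau)).
exact: inj_surj_bijective (tau_expand_inj Hact HR Hcent Hequiv) (tau_expand_surj HR).
Qed.
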